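(* Let $\mathcal{V}$ be a finite vocabulary, let $\mathbf{x}$ be a prompt, and consider responses (trajectories) $\tau=[y_1,\dots,y_T]\in\mathcal{V}^T$ of length $T$. Let $r(\mathbf{x},\tau)$ be a target reward, let $\pi_{\mathrm{SFT}}$ be a reference token-level policy with induced trajectory distribution $\rho_{\mathrm{SFT}}$, and let $\beta>0$ and $\alpha>0$. Let $\rho_{\mathrm{BL}}$ be the baseline trajectory-level policy aligned with the target reward, $$\rho_{\mathrm{BL}}(\cdot\mid \mathbf{x})=\arg\max_{\rho}\ \mathbb{E}_{\tau\sim\rho(\cdot\mid\mathbf{x})}[r(\mathbf{x},\tau)]-\beta\,\mathbb{D}_{\mathrm{KL}}\big[\rho(\cdot\mid\mathbf{x})\,\|\,\rho_{\mathrm{SFT}}(\cdot\mid\mathbf{x})\big],$$ i.e. $\rho_{\mathrm{BL}}(\tau\mid\mathbf{x})=\frac{1}{Z(\mathbf{x})}\rho_{\mathrm{SFT}}(\tau\mid\mathbf{x})\exp(r(\mathbf{x},\tau)/\beta)$, and let $\pi_{\mathrm{BL}}$ be the token-level policy inducing $\rho_{\mathrm{BL}}$. For a state $\mathbf{s}_t=[\mathbf{x},\mathbf{y}_{<t}]$ and token $z$, define $$\mathrm{TQ}^\star(\mathbf{s}_t,z)=\mathbb{E}_{\tau\sim\rho_{\mathrm{BL}}(\cdot\mid \mathbf{s}_t,z)}\big[r([\mathbf{s}_t,z],\tau)\big],$$ and define the decoding policy $$\pi_{\mathrm{alg}}(\cdot\mid\mathbf{s}_t)=\arg\max_{\pi}\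 \mathbb{E}_{z\sim\pi(\cdot\mid\mathbf{s}_t)}[\mathrm{TQ}^\star(\mathbf{s}_t,z)]-\alpha\,\mathbb{D}_{\mathrm{KL}}\big[\pi(\cdot\mid\mathbf{s}_t)\,\|\,\pi_{\mathrm{BL}}(\cdot\mid\mathbf{s}_t)\big],$$ equivalently $\pi_{\mathrm{alg}}(z\mid\mathbf{s}_t)\propto \pi_{\mathrm{BL}}(z\mid\mathbf{s}_t)\exp(\mathrm{TQ}^\star(\mathbf{s}_t,z)/\alpha)$, with induced trajectory distribution $\rho_{\mathrm{alg}}$. Let $V^*(\mathbf{x})=\max_{\rho}\mathbb{E}_{\tau\sim\rho(\cdot\mid\mathbf{x})}[r(\mathbf{x},\tau)]$ with maximizer $\rho^*$, let $V^{\mathrm{alg}}(\mathbf{x})=\mathbb{E}_{\tau\sim\rho_{\mathrm{alg}}(\cdot\mid\mathbf{x})}[r(\mathbf{x},\tau)]$, and let $\texttt{Sub-Gap}(\mathbf{x})=V^*(\mathbf{x})-V^{\mathrm{alg}}(\mathbf{x})$. Then: (1) For all $\mathbf{x}$, $$\texttt{Sub-Gap}(\mathbf{x})\le \beta\,\mathbb{D}_{\mathrm{KL}}\big(\rho^*(\cdot\mid\mathbf{x})\,\|\,\rho_{\mathrm{SFT}}(\cdot\mid\mathbf{x})\big)-\alpha\, h_\alpha(\mathbf{x}),$$ where $h_\alpha(\mathbf{x})=\sum_{t=1}^{T-1}\mathbb{E}_{\mathbf{y}_{<t}\sim\rho_{\mathrm{alg}}(\cdot\mid\mathbf{x})}\Big[\mathbb{D}_{\mathrm{KL}}\big(\pi_{\mathrm{alg}}(\cdot\mid[\mathbf{x},\mathbf{y}_{<t}])\,\|\,\pi_{\mathrm{BL}}(\cdot\mid[\mathbf{x},\mathbf{y}_{<t}])\big)\Big]\ge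 0$ (with $\mathbf{y}_{<1}$ the empty prefix). (2) If moreover $0\le r\le R_{\max}$, then $$\mathbb{D}_{\mathrm{KL}}\big(\rho_{\mathrm{alg}}(\cdot\mid\mathbf{x})\,\|\,\rho_{\mathrm{SFT}}(\cdot\mid\mathbf{x})\big)\le\Big(\frac{1}{\beta}+\frac{T}{\alpha}\Big)R_{\max}.$$
   Context: Language generation is modeled as a token-level MDP: a state $\mathbf{s}_t=[\mathbf{x},\mathbf{y}_{<t}]$ is the prompt concatenated with the tokens generated so far, an action is the next token $z\in\mathcal{V}$, and transitions are deterministic concatenation. A token-level policy $\pi(\cdot\mid\mathbf{s}_t)$ induces a trajectory-level distribution $\rho_\pi(\mathbf{y}\mid\mathbf{x})=\prod_{t}\pi(y_t\mid[\mathbf{x},\mathbf{y}_{<t}])$; conditional trajectory distributions such as $\rho(\cdot\mid\mathbf{s}_t,z)$ denote the distribution of the completion $\tau$ given the prefix $[\mathbf{s}_t,z]$, and $r([\mathbf{s}_t,z],\tau)$ is the reward of the full response obtained by concatenation. $Z(\mathbf{x})$ is the normalizing constant. This is the ''direct transfer'' setting, in which the baseline aligned model is aligned with the same target reward $r$. *)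

From mathcomp Require Import all_boot all_order all_algebra.
From mathcomp Require Import all_classical all_reals all_analysis.
Set Implicit Arguments. Unset Strict Implicit. Unset Printing Implicit Defensive.
Import Order.TTheory GRing.Theory Num.Theory.
Local Open Scope ring_scope.

(* A token-level policy: pi x s z = pi(z | [x, s]), s = generated prefix. *)
Definition is_policy (R : realType) (X : Type) (V : finType)
  (pi : X -> seq V -> V -> R) : Prop :=
  forall x s, (forall z, 0 <= pi x s z) /\ \sum_z pi x s z = 1.

Definition is_distr (R : realType) (I : finType) (p : I -> R) : Prop :=
  (forall i, 0 <= p i) /\ \sum_i p i = 1.

Definition traj_prob (R : realType) (X : Type) (V : finType) (T : nat)
  (pi : X -> seq V -> V -> R) (x : X) (tau : T.-tuple V) : R :=
  \prod_(i < T) pi x (take i tau) (tnth tau i).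

Definition expect (R : realType) (I : finType) (rho : I -> R) (f : I -> R) : R :=
  \sum_i rho i * f i.

(* KL divergence (convention 0 log 0 = 0; q assumed positive where used). *)
Definition KL (R : realType) (I : finType) (p q : I -> R) : R :=
  \sum_i (if p i == 0 then 0 else p i * ln (p i / q i)).

Definition rho_BL (R : realType) (X : Type) (V : finType) (T : nat)
  (beta : R) (r : X -> T.-tuple V -> R) (rhoSFT : X -> T.-tuple V -> R)
  (x : X) (tau : T.-tuple V) : R :=
  rhoSFT x tau * expR (r x tau / beta)
  / \sum_(tau' : T.-tuple V) rhoSFT x tau' * expR (r x tau' / beta).

(* TQ*(s,z) = E_{tau ~ rho_BL(. | [x,s,z])} [ r([x,s,z], tau) ]:
   conditional expectation of the reward of the full response given its
   prefix equals s ++ [z]. *)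
Definition TQstar (R : realType) (X : Type) (V : finType) (T : nat)
  (rhoBL : X -> T.-tuple V -> R) (r : X -> T.-tuple V -> R)
  (x : X) (s : seq V) (z : V) : R :=
  (\sum_(tau : T.-tuple V | take (size s).+1 tau == rcons s z) rhoBL x tau * r x tau)
  / (\sum_(tau : T.-tuple V | take (size s).+1 tau == rcons s z) rhoBL x tau).

Definition pi_alg (R : realType) (X : Type) (V : finType)
  (alpha : R) (piBL : X -> seq V -> V -> R) (TQ : X -> seq V -> V -> R)
  (x : X) (s : seq V) (z : V) : R :=
  piBL x s z * expR (TQ x s z / alpha)
  / \sum_(z' : V) piBL x s z' * expR (TQ x s z' / alpha).

(* h_alpha(x) = sum_{t=1}^{T-1} E_{y_<t ~ rho_alg}[ KL(pi_alg(.|[x,y_<t]) || pi_BL(.|[x,y_<t])) ];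
   0-indexed: prefixes of length t = 0 .. T-2; the expectation over the prefix
   marginal is written as an expectation over full trajectories. *)
Definition h_alpha (R : realType) (X : Type) (V : finType) (T : nat)
  (piAlg piBL : X -> seq V -> V -> R) (x : X) : R :=
  \sum_(t < T.-1) \sum_(tau : T.-tuple V)
     traj_prob piAlg x tau * KL (piAlg x (take t tau)) (piBL x (take t tau)).

From mathcomp Require Import all_boot all_order all_algebra.
From mathcomp Require Import all_classical all_reals all_analysis.
From mathcomp Require Import ring lra zify.
Import Order.TTheory GRing.Theory Num.Theory.
Local Open Scope ring_scope.
Set Implicit Arguments. Unset Strict Implicit. Unset Printing Implicit Defensive.

(* Everything rests on the Gibbs variational principle: for the tilt
   g = q exp(c/beta) / Z of a distribution q, every distribution p satisfies
   E_p c - beta KL(p||q) <= E_g c - beta KL(g||q).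
   With q = rho_SFT and c = r it shows that rho_BL beats any rho* up to
   beta KL(rho*||rho_SFT). With q = pi_BL(.|s) and c = TQ*(s,.), where TQ* is the
   continuation value of pi_BL, it shows that one step of pi_alg gains
   alpha KL(pi_alg||pi_BL) over pi_BL; the performance-difference telescoping
   over the T positions adds these gains up to V_alg >= V_BL + alpha h_alpha.
   For the KL bound, a tilt by values in [0, Rmax] inflates probabilities by at
   most exp(Rmax/beta) once and by exp(Rmax/alpha) at each of the T tokens. *)

Section Words.
Variables (R : realType) (V : finType).
Implicit Types (h g : seq V -> R) (n : nat).

Fixpoint sum_words n h : R :=
  if n is n'.+1 then \sum_z sum_words n' (fun u => h (z :: u)) else h [::].

Lemma eq_sum_words n h g :
  (forall u, size u = n -> h u = g u) -> sum_words n h = sum_words n g.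
Proof.
elim: n h g => [|n IH] h g hg /=; first exact: hg.
by apply: eq_bigr => z _; apply: IH => u su; apply: hg; rewrite /= su.
Qed.

Lemma ler_sum_words n h g :
  (forall u, size u = n -> h u <= g u) -> sum_words n h <= sum_words n g.
Proof.
elim: n h g => [|n IH] h g hg /=; first exact: hg.
by apply: ler_sum => z _; apply: IH => u su; apply: hg; rewrite /= su.
Qed.

Lemma sum_words0 n : sum_words n (fun=> 0) = 0.
Proof. by elim: n => [|n IH] //=; rewrite big1. Qed.

Lemma sum_words_ge0 n h : (forall u, size u = n -> 0 <= h u) -> 0 <= sum_words n h.
Proof. by move=> h_ge0; rewrite -(sum_words0 n); apply: ler_sum_words. Qed.

Lemma sum_wordsD n h g :
  sum_words n (fun u => h u + g u) = sum_words n h + sum_words n g.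
Proof.
elim: n h g => [|n IH] h g //=.
by rewrite -big_split; apply: eq_bigr => z _; apply: IH.
Qed.

Lemma sum_wordsZ n c h : sum_words n (fun u => c * h u) = c * sum_words n h.
Proof.
elim: n h => [|n IH] h //=.
by rewrite mulr_sumr; apply: eq_bigr => z _; apply: IH.
Qed.

Lemma sum_words_cat m n h :
  sum_words (m + n) h = sum_words m (fun a => sum_words n (fun b => h (a ++ b))).
Proof. by elim: m h => [|m IH] h //=; apply: eq_bigr => z _; apply: IH. Qed.

Lemma sum_words_rcons n h :
  sum_words n.+1 h = sum_words n (fun a => \sum_z h (rcons a z)).
Proof.
rewrite -addn1 sum_words_cat; apply: eq_sum_words => a _ /=.
by apply: eq_bigr => z _; rewrite cats1.
Qed.

Lemma sum_words_delta p h :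
  sum_words (size p) (fun a => if a == p then h a else 0) = h p.
Proof.
elim: p h => [|z0 p IH] h //=.
rewrite (bigD1 z0) //= big1 ?addr0.
  rewrite -(IH (fun a => h (z0 :: a))); apply: eq_sum_words => u _.
  by rewrite eqseq_cons eqxx.
move=> z zz0; rewrite -[RHS](sum_words0 (size p)); apply: eq_sum_words => u _.
by rewrite eqseq_cons (negbTE zz0).
Qed.

Lemma sum_tuples n h : \sum_(t : n.-tuple V) h t = sum_words n h.
Proof.
elim: n h => [|n IH] h /=.
  rewrite (eq_bigr (fun=> h [::])) => [|t _]; last by rewrite tuple0.
  by rewrite sumr_const card_tuple expn0.
rewrite -(eq_bigr _ (fun z _ => IH (fun u => h (z :: u)))) pair_big /=.
rewrite (reindex (fun p : V * n.-tuple V => [tuple of p.1 :: p.2])) /=.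
  by apply: eq_bigr => -[z t] _.
exists (fun t : n.+1.-tuple V => (thead t, [tuple of behead t])).
  by move=> [z t] _ /=; rewrite theadE; congr pair; apply: val_inj.
by move=> t _ /=; rewrite -tuple_eta.
Qed.

End Words.

Section ContinuationProbability.
Variables (R : realType) (V : finType) (pi : seq V -> V -> R).

Fixpoint cont_prob (p u : seq V) : R :=
  if u is z :: u' then pi p z * cont_prob (rcons p z) u' else 1.

Lemma cont_prob_cat p u1 u2 :
  cont_prob p (u1 ++ u2) = cont_prob p u1 * cont_prob (p ++ u1) u2.
Proof.
elim: u1 p => [|z u1 IH] p /=; first by rewrite mul1r cats0.
by rewrite IH mulrA cat_rcons.
Qed.

Lemma cont_prob_rcons p u z :
  cont_prob p (rcons u z) = cont_prob p u * pi (p ++ u) z.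
Proof. by rewrite -cats1 cont_prob_cat /= mulr1. Qed.

Lemma cont_prob_nth (v0 : V) p u :
  \prod_(0 <= i < size u) pi (p ++ take i u) (nth v0 u i) = cont_prob p u.
Proof.
elim: u p => [|z u IH] p /=; first by rewrite big_geq.
rewrite big_nat_recl //= cats0 -IH; congr (_ * _).
by apply: eq_bigr => i _ /=; rewrite cat_rcons.
Qed.

Hypothesis pi_ge0 : forall s z, 0 <= pi s z.

Lemma cont_prob_ge0 p u : 0 <= cont_prob p u.
Proof. by elim: u p => [|z u IH] p /=; rewrite ?mulr_ge0. Qed.

Lemma policy_gt0_of_cont_prob_gt0 (T : nat) :
  (forall tau : T.-tuple V, 0 < cont_prob [::] tau) ->
  forall a z, (size a < T)%N -> 0 < pi a z.
Proof.
move=> tau_gt0 a z aT.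
have sizeT : size (rcons a z ++ nseq (T - (size a).+1) z) == T.
  by rewrite size_cat size_rcons size_nseq subnKC.
have := tau_gt0 (Tuple sizeT); rewrite /= cont_prob_cat cont_prob_rcons /= => prod_gt0.
rewrite lt_def pi_ge0 andbT; apply: contraTneq prod_gt0 => ->.
by rewrite mulr0 mul0r ltxx.
Qed.

Lemma cont_prob_gt0 n :
  (forall s z, (size s < n)%N -> 0 < pi s z) ->
  forall p u, (size (p ++ u) <= n)%N -> 0 < cont_prob p u.
Proof.
move=> pi_gt0 p u; elim: u p => [|z u IH] p /= pun; first exact: ltr01.
rewrite size_cat /= in pun.
by rewrite mulr_gt0 ?pi_gt0 ?IH ?cat_rcons ?size_cat //; lia.
Qed.

Hypothesis pi_sum1 : forall s, \sum_z pi s z = 1.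

Lemma sum_cont_prob n p : sum_words n (cont_prob p) = 1.
Proof.
elim: n p => [|n IH] p //=; rewrite -(pi_sum1 p); apply: eq_bigr => z _ /=.
by rewrite sum_wordsZ IH mulr1.
Qed.

Lemma sum_words_marginal k n (F : seq V -> R) : (k <= n)%N ->
  sum_words n (fun u => cont_prob [::] u * F (take k u)) =
  sum_words k (fun a => cont_prob [::] a * F a).
Proof.
move=> kn; rewrite -(subnKC kn) sum_words_cat; apply: eq_sum_words => a sa.
rewrite -[RHS]mulr1 -(sum_cont_prob (n - k) a) -sum_wordsZ.
by apply: eq_sum_words => b _; rewrite cont_prob_cat take_size_cat // mulrAC.
Qed.

Lemma sum_words_prefix n p (F : seq V -> R) : (size p <= n)%N ->
  sum_words n (fun u =>
    cont_prob [::] u * (if take (size p) u == p then F u else 0)) =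
  cont_prob [::] p * sum_words (n - size p) (fun b => cont_prob p b * F (p ++ b)).
Proof.
move=> pn; rewrite -{1}(subnKC pn) sum_words_cat.
transitivity (sum_words (size p) (fun a => if a == p then
    sum_words (n - size p) (fun b => cont_prob [::] (a ++ b) * F (a ++ b)) else 0)).
  apply: eq_sum_words => a sa; case: eqP => [-> | /eqP ap].
    by apply: eq_sum_words => b _; rewrite take_size_cat // eqxx.
  rewrite -[RHS](sum_words0 R V (n - size p)); apply: eq_sum_words => b _.
  by rewrite take_size_cat // (negbTE ap) mulr0.
rewrite sum_words_delta -sum_wordsZ; apply: eq_sum_words => b _.
by rewrite cont_prob_cat mulrA.
Qed.

End ContinuationProbability.

Lemma cont_prob_le_pow (R : realType) (V : finType) (pi pi' : seq V -> V -> R)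
    (c : R) :
  (forall s z, 0 <= pi s z) -> (forall s z, pi s z <= pi' s z * c) ->
  forall p u, cont_prob pi p u <= cont_prob pi' p u * c ^+ size u.
Proof.
move=> pi_ge0 pi_le p u; elim: u p => [|z u IH] p /=; first by rewrite mulr1.
rewrite exprS mulrACA; apply: ler_pM => //; first exact: cont_prob_ge0.
Qed.

Section Trajectories.
Variables (R : realType) (X : Type) (V : finType) (T : nat).
Variables (pi : X -> seq V -> V -> R) (x : X).

Lemma traj_probE (tau : T.-tuple V) : traj_prob pi x tau = cont_prob (pi x) [::] tau.
Proof.
case: T tau => [|n] tau; first by rewrite /traj_prob big_ord0 tuple0.
rewrite -(cont_prob_nth _ (thead tau)) size_tuple big_mkord.
by apply: eq_bigr => i _; rewrite (tnth_nth (thead tau)).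
Qed.

Lemma sum_traj_prob (F : seq V -> R) :
  \sum_(tau : T.-tuple V) traj_prob pi x tau * F tau =
  sum_words T (fun u => cont_prob (pi x) [::] u * F u).
Proof. by rewrite -sum_tuples; apply: eq_bigr => tau _; rewrite traj_probE. Qed.

Lemma sum_prefix_traj_prob p (F : seq V -> R) : (size p <= T)%N ->
  \sum_(tau : T.-tuple V | take (size p) tau == p) traj_prob pi x tau * F tau =
  cont_prob (pi x) [::] p *
  sum_words (T - size p) (fun b => cont_prob (pi x) p b * F (p ++ b)).
Proof.
move=> pT; rewrite -sum_words_prefix // -sum_tuples big_mkcond /=.
by apply: eq_bigr => tau _; rewrite traj_probE; case: ifP; rewrite ?mulr0.
Qed.

Definition word_fun (f : T.-tuple V -> R) (u : seq V) : R :=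
  if insub u is Some tau then f tau else 0.

Lemma word_funE f (tau : T.-tuple V) : word_fun f tau = f tau.
Proof. by rewrite /word_fun valK. Qed.

Lemma expect_traj_prob f :
  expect (traj_prob pi x) f =
  sum_words T (fun u => cont_prob (pi x) [::] u * word_fun f u).
Proof. by rewrite -sum_traj_prob; apply: eq_bigr => tau _; rewrite word_funE. Qed.

Hypothesis pi_distr : forall s, is_distr (pi x s).

Lemma traj_prob_distr : is_distr (traj_prob (T := T) pi x).
Proof.
split=> [tau|]; first by apply: prodr_ge0 => i _; apply: (pi_distr _).1.
rewrite -(sum_cont_prob (fun s => (pi_distr s).2) T [::]) -sum_tuples.
by apply: eq_bigr => tau _; rewrite traj_probE.
Qed.

End Trajectories.

Section KullbackLeibler.
Variables (R : realType) (I : finType).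
Implicit Types (p q : I -> R).

Lemma ler_sub_mul_ln (a b : R) : 0 < a -> 0 < b -> a - b <= a * ln (a / b).
Proof.
move=> a_gt0 b_gt0; have ba_gt0 : 0 < b / a by rewrite divr_gt0.
have ln_le : ln (b / a) <= b / a - 1.
  by have := @le_ln1Dx R (b / a - 1); rewrite [1 + _]addrC subrK; apply; lra.
rewrite -[a / b]invf_div lnV ?posrE // mulrN.
have : a * ln (b / a) <= a * (b / a - 1) by rewrite ler_pM2l.
by rewrite mulrBr mulrCA divff ?mulr1 ?gt_eqF //; lra.
Qed.

Lemma KL_ge0 p q : is_distr p -> is_distr q -> (forall i, 0 < q i) -> 0 <= KL p q.
Proof.
move=> [p_ge0 p_sum1] [_ q_sum1] q_gt0.
rewrite -(subrr 1) -[X in X - _]p_sum1 -[X in _ - X]q_sum1 -sumrB.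
apply: ler_sum => i _; case: eqP => [->|/eqP pi0]; first by rewrite sub0r oppr_le0 ltW.
by apply: ler_sub_mul_ln; rewrite // lt_def pi0 p_ge0.
Qed.

Lemma KL_self p : KL p p = 0.
Proof. by apply: big1 => i _; case: eqP => // /eqP pi0; rewrite divff // ln1 mulr0. Qed.

Lemma KL_le p q (C : R) : is_distr p -> (forall i, p i <= q i * expR C) -> KL p q <= C.
Proof.
move=> [p_ge0 p_sum1] p_le; rewrite -[C]mul1r -p_sum1 mulr_suml.
apply: ler_sum => i _; case: eqP => [->|/eqP pi0]; first by rewrite mul0r.
have pi_gt0 : 0 < p i by rewrite lt_def pi0 p_ge0.
have qi_gt0 : 0 < q i.
  by rewrite -(pmulr_lgt0 _ (expR_gt0 C)); apply: lt_le_trans (p_le i).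
rewrite ler_pM2l // -[C in _ <= C]expRK ler_ln ?posrE ?divr_gt0 ?expR_gt0 //.
by rewrite ler_pdivrMr // mulrC.
Qed.

End KullbackLeibler.

(* [rho_BL] and [pi_alg] unfold to instances of [tilt]. *)
Definition tilt (R : realType) (I : finType) (q c : I -> R) (beta : R) (i : I) : R :=
  q i * expR (c i / beta) / \sum_j q j * expR (c j / beta).

Section Tilt.
Variables (R : realType) (I : finType) (q c : I -> R) (beta : R).
Hypothesis q_distr : is_distr q.

Local Notation Z := (\sum_j q j * expR (c j / beta)).

Lemma tilt_norm_gt0 : 0 < Z.
Proof.
have [q_ge0 q_sum1] := q_distr.
have term_ge0 j : true -> 0 <= q j * expR (c j / beta) by rewrite mulr_ge0 ?expR_ge0.
rewrite lt_def sumr_ge0 // andbT; apply/eqP => /(psumr_eq0P term_ge0) Z0.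
suff : \sum_j q j = 0 by rewrite q_sum1 => /eqP; rewrite oner_eq0.
apply: big1 => j _; have /eqP := Z0 j isT.
by rewrite mulf_eq0 (gt_eqF (expR_gt0 _)) orbF => /eqP.
Qed.

Lemma tilt_distr : is_distr (tilt q c beta).
Proof.
have [q_ge0 _] := q_distr; split=> [i|].
  by rewrite divr_ge0 ?mulr_ge0 ?expR_ge0 // ltW // tilt_norm_gt0.
by rewrite -mulr_suml divff // gt_eqF // tilt_norm_gt0.
Qed.

Lemma tilt_gt0 i : 0 < q i -> 0 < tilt q c beta i.
Proof. by move=> qi_gt0; rewrite divr_gt0 ?mulr_gt0 ?expR_gt0 ?tilt_norm_gt0. Qed.

Lemma tilt_le (M : R) i : 0 < beta -> (forall j, 0 <= c j <= M) ->
  tilt q c beta i <= q i * expR (M / beta).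
Proof.
move=> beta_gt0 c_range; have [q_ge0 q_sum1] := q_distr.
have Z_ge1 : 1 <= Z.
  rewrite -q_sum1; apply: ler_sum => j _; rewrite ler_peMr //.
  have := expR_ge1Dx (c j / beta); have /andP[cj_ge0 _] := c_range j.
  have : 0 <= c j / beta by rewrite divr_ge0 // ltW.
  lra.
rewrite ler_pdivrMr ?tilt_norm_gt0 //; apply: le_trans (ler_peMr _ Z_ge1).
  by rewrite ler_wpM2l // ler_expR ler_pM2r ?invr_gt0 //; case/andP: (c_range i).
by rewrite mulr_ge0 ?expR_ge0.
Qed.

Lemma expect_sub_KL_tilt p : 0 < beta -> is_distr p -> (forall i, 0 < q i) ->
  expect p c - beta * KL p q = beta * ln Z - beta * KL p (tilt q c beta).
Proof.
move=> beta_gt0 [p_ge0 p_sum1] q_gt0; have Z_gt0 := tilt_norm_gt0.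
rewrite -[beta * ln Z]mul1r -p_sum1 mulr_suml /expect /KL !mulr_sumr -!sumrB.
apply: eq_bigr => i _; case: eqP => [->|/eqP pi0]; first by rewrite !mul0r !mulr0 subrr.
have pi_gt0 : 0 < p i by rewrite lt_def pi0 p_ge0.
have e_gt0 := expR_gt0 (c i / beta); have qi_gt0 := q_gt0 i.
have -> : p i / q i = p i / tilt q c beta i * (expR (c i / beta) / Z).
  by rewrite /tilt; field; rewrite !gt_eqF.
rewrite lnM ?posrE ?divr_gt0 ?tilt_gt0 ?mulr_gt0 // [ln (_ / Z)]ln_div ?posrE // expRK.
by field; rewrite gt_eqF.
Qed.

Lemma gibbs_optimal p : 0 < beta -> is_distr p -> (forall i, 0 < q i) ->
  expect p c - beta * KL p q <= expect (tilt q c beta) c - beta * KL (tilt q c beta) q.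
Proof.
move=> beta_gt0 p_distr q_gt0.
rewrite !expect_sub_KL_tilt //; last exact: tilt_distr.
rewrite KL_self mulr0 subr0.
have := KL_ge0 p_distr tilt_distr (fun i => tilt_gt0 (q_gt0 i)).
have := beta_gt0; nra.
Qed.

End Tilt.

Lemma weighted_mean_bound (R : realFieldType) (I : finType) (P : pred I)
    (w f : I -> R) (M : R) :
  0 <= M -> (forall i, 0 <= w i) -> (forall i, 0 <= f i <= M) ->
  0 <= (\sum_(i | P i) w i * f i) / (\sum_(i | P i) w i) <= M.
Proof.
move=> M_ge0 w_ge0 f_range.
have den_ge0 : 0 <= \sum_(i | P i) w i by apply: sumr_ge0.
have num_ge0 : 0 <= \sum_(i | P i) w i * f i.
  by apply: sumr_ge0 => i _; case/andP: (f_range i) => fi_ge0 _; rewrite mulr_ge0.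
have num_le : \sum_(i | P i) w i * f i <= M * \sum_(i | P i) w i.
  rewrite mulr_sumr; apply: ler_sum => i _.
  by case/andP: (f_range i) => _ fi_le; rewrite mulrC ler_wpM2r.
have [->|den_neq0] := eqVneq (\sum_(i | P i) w i) 0; first by rewrite invr0 mulr0 lexx.
by rewrite divr_ge0 //= ler_pdivrMr // lt_def den_neq0.
Qed.

Lemma telescope_le (R : numDomainType) (W e : nat -> R) n :
  (forall k, (k < n)%N -> W k + e k <= W k.+1) -> W 0%N + \sum_(k < n) e k <= W n.
Proof.
elim: n => [|n IH] step; first by rewrite big_ord0 addr0.
rewrite big_ord_recr addrA /=; apply: le_trans (step n (ltnSn n)).
by rewrite lerD2r IH // => k kn; apply: step; apply: leqW.
Qed.

Section PerformanceDifference.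
Variables (R : realType) (V : finType) (piB piA : seq V -> V -> R).
Variables (reward : seq V -> R) (T : nat) (alpha : R).

Definition cont_value (a : seq V) : R :=
  sum_words (T - size a) (fun u => cont_prob piB a u * reward (a ++ u)).

Definition expected_KL (k : nat) : R :=
  sum_words k (fun a => cont_prob piA [::] a * KL (piA a) (piB a)).

Lemma cont_value_rec a : (size a < T)%N ->
  cont_value a = \sum_z piB a z * cont_value (rcons a z).
Proof.
move=> aT; rewrite /cont_value -(subnSK aT) /=; apply: eq_bigr => z _.
rewrite size_rcons -sum_wordsZ; apply: eq_sum_words => u _ /=.
by rewrite cat_rcons mulrA.
Qed.

Hypothesis piA_ge0 : forall s z, 0 <= piA s z.
Hypothesis step_gain : forall a, (size a < T)%N ->
  \sum_z piB a z * cont_value (rcons a z) + alpha * KL (piA a) (piB a) <=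
  \sum_z piA a z * cont_value (rcons a z).

Lemma performance_difference :
  sum_words T (fun u => cont_prob piB [::] u * reward u) +
    alpha * \sum_(k < T) expected_KL k <=
  sum_words T (fun u => cont_prob piA [::] u * reward u).
Proof.
(* [W k]: follow [piA] for the first [k] tokens, then [piB]. *)
pose W k := sum_words k (fun a => cont_prob piA [::] a * cont_value a).
have W0 : W 0%N = sum_words T (fun u => cont_prob piB [::] u * reward u).
  by rewrite /W /= mul1r /cont_value subn0.
have WT : W T = sum_words T (fun u => cont_prob piA [::] u * reward u).
  by apply: eq_sum_words => a sa; rewrite /cont_value sa subnn /= mul1r cats0.
rewrite -W0 -WT mulr_sumr.
apply: (telescope_le (e := fun k => alpha * expected_KL k)) => k kT.
rewrite /W /expected_KL sum_words_rcons -sum_wordsZ -sum_wordsD.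
apply: ler_sum_words => a sa; have aT : (size a < T)%N by rewrite sa.
have -> : \sum_z cont_prob piA [::] (rcons a z) * cont_value (rcons a z) =
          cont_prob piA [::] a * \sum_z piA a z * cont_value (rcons a z).
  by rewrite mulr_sumr; apply: eq_bigr => z _; rewrite cont_prob_rcons mulrA.
rewrite cont_value_rec // mulrCA -mulrDr.
by rewrite ler_wpM2l ?cont_prob_ge0 ?step_gain.
Qed.

End PerformanceDifference.

Section Decoding.
Variables (R : realType) (X : Type) (V : finType) (T : nat).
Variables (r : X -> T.-tuple V -> R) (piSFT piBL : X -> seq V -> V -> R).
Variables (beta alpha : R) (x : X).
Hypotheses (beta_gt0 : 0 < beta) (alpha_gt0 : 0 < alpha).
Hypothesis SFT_distr : forall s, is_distr (piSFT x s).
Hypothesis SFT_gt0 : forall s z, 0 < piSFT x s z.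
Hypothesis BL_distr : forall s, is_distr (piBL x s).
Hypothesis BL_induced :
  forall tau, traj_prob piBL x tau = rho_BL beta r (traj_prob piSFT) x tau.

Local Notation rhoSFT := (traj_prob (T := T) piSFT).
Local Notation rhoBL := (rho_BL beta r rhoSFT).
Local Notation piAlg := (pi_alg alpha piBL (TQstar rhoBL r)).
Local Notation rhoAlg := (traj_prob (T := T) piAlg).
Local Notation value := (cont_value (piBL x) (word_fun (r x)) T).
Local Notation expected_KL_alg := (expected_KL (piBL x) (piAlg x)).

Lemma rhoSFT_gt0 (tau : T.-tuple V) : 0 < rhoSFT x tau.
Proof. by apply: prodr_gt0 => i _. Qed.

Lemma rhoSFT_distr : is_distr (rhoSFT x).
Proof. exact: traj_prob_distr. Qed.

Lemma rhoBL_distr : is_distr (rhoBL x).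
Proof. exact: tilt_distr rhoSFT_distr. Qed.

Lemma rhoBL_gt0 tau : 0 < rhoBL x tau.
Proof. exact (tilt_gt0 (r x) beta rhoSFT_distr (rhoSFT_gt0 tau)). Qed.

Lemma piBL_gt0 a z : (size a < T)%N -> 0 < piBL x a z.
Proof.
apply: policy_gt0_of_cont_prob_gt0 => [s v|tau]; first exact: (BL_distr s).1.
by rewrite -traj_probE BL_induced rhoBL_gt0.
Qed.

Lemma piAlg_distr s : is_distr (piAlg x s).
Proof. exact: tilt_distr. Qed.

Lemma piAlg_ge0 s z : 0 <= piAlg x s z.
Proof. exact: (piAlg_distr s).1. Qed.

Lemma TQstar_value a z : (size a < T)%N -> TQstar rhoBL r x a z = value (rcons a z).
Proof.
move=> aT; have azT : (size (rcons a z) <= T)%N by rewrite size_rcons.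
have sum_BL (F : seq V -> R) :
    \sum_(tau : T.-tuple V | take (size a).+1 tau == rcons a z) rhoBL x tau * F tau =
    cont_prob (piBL x) [::] (rcons a z) *
    sum_words (T - size (rcons a z))
      (fun b => cont_prob (piBL x) (rcons a z) b * F (rcons a z ++ b)).
  rewrite -sum_prefix_traj_prob // size_rcons.
  by apply: eq_bigr => tau _; rewrite BL_induced.
rewrite /TQstar.
under eq_bigr do rewrite -(word_funE (r x)).
under [X in _ / X]eq_bigr do rewrite -[rhoBL x _]mulr1.
rewrite (sum_BL (word_fun (r x))) (sum_BL (fun=> 1)).
under [in X in _ / X]eq_sum_words => u _ do rewrite mulr1.
rewrite sum_cont_prob => [|s]; last exact: (BL_distr s).2.
rewrite mulr1 mulrAC divff ?mul1r // gt_eqF //.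
by apply: cont_prob_gt0 => [s v|]; [exact: piBL_gt0 | rewrite cat0s].
Qed.

Lemma piAlg_step_gain a : (size a < T)%N ->
  \sum_z piBL x a z * value (rcons a z) + alpha * KL (piAlg x a) (piBL x a) <=
  \sum_z piAlg x a z * value (rcons a z).
Proof.
move=> aT; under eq_bigr do rewrite -TQstar_value //.
under [X in _ <= X]eq_bigr do rewrite -TQstar_value //.
have gibbs : expect (piBL x a) (TQstar rhoBL r x a) - alpha * KL (piBL x a) (piBL x a) <=
    expect (piAlg x a) (TQstar rhoBL r x a) - alpha * KL (piAlg x a) (piBL x a).
  exact (gibbs_optimal _ (BL_distr a) alpha_gt0 (BL_distr a) (fun z => piBL_gt0 z aT)).
by move: gibbs; rewrite KL_self mulr0 subr0 /expect; lra.
Qed.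

Lemma expect_rhoBL_add_KL_le :
  expect (rhoBL x) (r x) + alpha * \sum_(k < T) expected_KL_alg k <=
  expect (rhoAlg x) (r x).
Proof.
have -> : expect (rhoBL x) (r x) = expect (traj_prob piBL x) (r x).
  by apply: eq_bigr => tau _; rewrite BL_induced.
rewrite !expect_traj_prob; apply: performance_difference piAlg_ge0 _.
exact: piAlg_step_gain.
Qed.

Lemma expected_KL_alg_ge0 k : (k < T)%N -> 0 <= expected_KL_alg k.
Proof.
move=> kT; apply: sum_words_ge0 => a sa; rewrite mulr_ge0 ?cont_prob_ge0 //.
  exact: piAlg_ge0.
apply: KL_ge0 (piAlg_distr a) (BL_distr a) _ => z.
by apply: piBL_gt0; rewrite sa.
Qed.

Lemma h_alpha_expected_KL : h_alpha T piAlg piBL x = \sum_(t < T.-1) expected_KL_alg t.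
Proof.
apply: eq_bigr => t _.
rewrite (sum_traj_prob T piAlg x (fun u => KL (piAlg x (take t u)) (piBL x (take t u)))).
apply: (sum_words_marginal (fun s => (piAlg_distr s).2)
  (fun a => KL (piAlg x a) (piBL x a))).
exact: leq_trans (ltnW (ltn_ord t)) (leq_pred T).
Qed.

Lemma h_alpha_ge0 : 0 <= h_alpha T piAlg piBL x.
Proof.
rewrite h_alpha_expected_KL; apply: sumr_ge0 => t _; apply: expected_KL_alg_ge0.
exact: leq_trans (ltn_ord t) (leq_pred T).
Qed.

Lemma h_alpha_le : h_alpha T piAlg piBL x <= \sum_(k < T) expected_KL_alg k.
Proof.
rewrite h_alpha_expected_KL -!(big_mkord xpredT).
rewrite [X in _ <= X](big_cat_nat _ (leq_pred T)) //=.
rewrite lerDl big_nat_cond; apply: sumr_ge0 => k /andP[/andP[_ kT] _].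
exact: expected_KL_alg_ge0.
Qed.

Lemma suboptimality_gap rho : is_distr rho ->
  expect rho (r x) - expect (rhoAlg x) (r x) <=
  beta * KL rho (rhoSFT x) - alpha * h_alpha T piAlg piBL x.
Proof.
move=> rho_distr.
have gibbs : expect rho (r x) - beta * KL rho (rhoSFT x) <=
    expect (rhoBL x) (r x) - beta * KL (rhoBL x) (rhoSFT x).
  exact (gibbs_optimal _ rhoSFT_distr beta_gt0 rho_distr rhoSFT_gt0).
have KL_BL_ge0 := mulr_ge0 (ltW beta_gt0) (KL_ge0 rhoBL_distr rhoSFT_distr rhoSFT_gt0).
have h_le : alpha * h_alpha T piAlg piBL x <= alpha * \sum_(k < T) expected_KL_alg k.
  by rewrite ler_wpM2l ?(ltW alpha_gt0) ?h_alpha_le.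
have := expect_rhoBL_add_KL_le; lra.
Qed.

Variable Rmax : R.
Hypothesis r_range : forall tau, 0 <= r x tau <= Rmax.

Lemma TQstar_range s z : 0 <= TQstar rhoBL r x s z <= Rmax.
Proof.
(* [0 <= Rmax] is needed when [size s >= T]: both sums are then empty and TQstar is 0. *)
apply: weighted_mean_bound => [|tau|//]; last exact: ltW (rhoBL_gt0 tau).
by case/andP: (r_range (nseq_tuple T z)); apply: le_trans.
Qed.

Lemma rhoAlg_le tau :
  rhoAlg x tau <= rhoSFT x tau * expR (Rmax / beta + T%:R * (Rmax / alpha)).
Proof.
have piAlg_le s v : piAlg x s v <= piBL x s v * expR (Rmax / alpha).
  exact: tilt_le (BL_distr s) _ _ alpha_gt0 (TQstar_range s).
have rhoBL_le : rhoBL x tau <= rhoSFT x tau * expR (Rmax / beta).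
  exact: tilt_le rhoSFT_distr _ _ beta_gt0 r_range.
rewrite traj_probE expRD expRM_natl mulrA.
apply: le_trans (cont_prob_le_pow piAlg_ge0 piAlg_le [::] tau) _.
rewrite size_tuple -traj_probE BL_induced ler_wpM2r ?exprn_ge0 ?expR_ge0 //.
Qed.

Lemma KL_rhoAlg_le : KL (rhoAlg x) (rhoSFT x) <= (beta^-1 + T%:R / alpha) * Rmax.
Proof.
have -> : (beta^-1 + T%:R / alpha) * Rmax = Rmax / beta + T%:R * (Rmax / alpha).
  by rewrite mulrDl mulrC mulrAC mulrA.
apply: KL_le _ rhoAlg_le; exact: traj_prob_distr piAlg_distr.
Qed.

End Decoding.

Theorem theorem1 (R : realType) (X : Type) (V : finType) (T : nat)
  (r : X -> T.-tuple V -> R) (piSFT piBL : X -> seq V -> V -> R)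
  (beta alpha : R) (rhostar : X -> T.-tuple V -> R) :
  0 < beta -> 0 < alpha ->
  is_policy piSFT -> (forall x s z, 0 < piSFT x s z) ->
  is_policy piBL ->
  (forall x tau, traj_prob piBL x tau = rho_BL beta r (traj_prob piSFT) x tau) ->
  (forall x, is_distr (rhostar x) /\
     forall rho : T.-tuple V -> R, is_distr rho ->
       expect rho (r x) <= expect (rhostar x) (r x)) ->
  let rhoSFT := traj_prob piSFT in
  let rhoBL := rho_BL beta r rhoSFT in
  let piAlg := pi_alg alpha piBL (TQstar rhoBL r) in
  let rhoAlg := traj_prob piAlg in
  (forall x,
     expect (rhostar x) (r x) - expect (rhoAlg x) (r x)
       <= beta * KL (rhostar x) (rhoSFT x) - alpha * h_alpha T piAlg piBL x
     /\ 0 <= h_alpha T piAlg piBL x) /\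
  (forall Rmax : R, (forall x tau, 0 <= r x tau <= Rmax) ->
     forall x, KL (rhoAlg x) (rhoSFT x) <= (beta^-1 + T%:R / alpha) * Rmax).
Proof.
move=> beta_gt0 alpha_gt0 SFT_policy SFT_gt0 BL_policy BL_induced rhostar_max.
move=> rhoSFT rhoBL piAlg rhoAlg; rewrite {}/rhoAlg {}/piAlg {}/rhoBL {}/rhoSFT.
split=> [x | Rmax r_range x].
  (* Only [is_distr (rhostar x)] is used: the bound holds for every distribution. *)
  split; first exact: suboptimality_gap beta_gt0 alpha_gt0 (SFT_policy x) (SFT_gt0 x)
    (BL_policy x) (BL_induced x) _ (rhostar_max x).1.
  exact: h_alpha_ge0 alpha (SFT_policy x) (SFT_gt0 x) (BL_policy x) (BL_induced x).
exact (KL_rhoAlg_le beta_gt0 alpha_gt0 (SFT_policy x) (SFT_gt0 x)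
  (BL_policy x) (BL_induced x) (r_range x)).
Qed.
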